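(* The set theory $\mathsf{AST}+\mathsf{EXT}$ is interpretable in $\mathsf{Seq}^+$, and thus also in $\mathsf{Seq}$.
   Context: $\mathsf{Seq}$ is the theory in the language $\{e,\vdash,\circ\}$ ($e$ constant, $\vdash$ and $\circ$ binary functions) with axioms: ($\mathsf{Seq}_1$) $\forall xy[x\vdash y\neq e]$; ($\mathsf{Seq}_2$) $\forall x_1x_2y_1y_2[x_1\vdash x_2=y_1\vdash y_2\rightarrow(x_1=y_1\wedge x_2=y_2)]$; ($\mathsf{Seq}_3$) $\forall x[x\circ e=x]$; ($\mathsf{Seq}_4$) $\forall xyz[x\circ(y\vdash z)=(x\circ y)\vdash z]$; ($\mathsf{Seq}_5$) $\forall x[x=e\vee\exists yz[x=y\vdash z]]$. $\mathsf{Seq}^+$ extends $\mathsf{Seq}$ by ($\mathsf{Seq}^*_3$) $\forall x[x\circ e=x\wedge e\circ x=x]$, ($\mathsf{Seq}^*_5$) $\forall xyzw[x\circ y=z\circ w\leftrightarrow\exists u[(z=x\circ u\wedge u\circ w=y)\vee(x=z\circ u\wedge u\circ y=w)]]$, and ($\mathsf{Seq}^+_c$) $\forall xyz[(x\circ y=x\circ z\vee y\circ x=z\circ x)\rightarrow y=z]$. $\mathsf{AST}+\mathsf{EXT}$ is the theory in the language $\{\in\}$ with axioms $\exists y\forall x[x\notin y]$ (empty set), $\forall xy\exists z\forall u[u\in z\leftrightarrow(u\in x\vee u=y)]$ (adjunction), and $\forall xy[\forall z[z\in x\leftrightarrow z\in y]\rightarrow x=y]$ (extensionality). *)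

Record SeqStr := {
  car :> Type;
  se : car;
  sturn : car -> car -> car;
  scirc : car -> car -> car
}.

(** Terms and formulas of the language {e, ⊢, ∘} (de Bruijn variables). *)
Inductive term : Type :=
| tvar : nat -> term
| te : term
| tturn : term -> term -> term
| tcirc : term -> term -> term.

Inductive form : Type :=
| fbot : form
| feq : term -> term -> form
| fnot : form -> form
| fand : form -> form -> form
| for_ : form -> form -> form
| fimp : form -> form -> form
| fall : form -> form
| fex : form -> form.

Definition scons {A : Type} (a : A) (rho : nat -> A) : nat -> A :=
  fun n => match n with 0 => a | S k => rho k end.

Fixpoint eval (M : SeqStr) (rho : nat -> M) (t : term) : M :=
  match t with
  | tvar n => rho n
  | te => se M
  | tturn t u => sturn M (eval M rho t) (eval M rho u)
  | tcirc t u => scirc M (eval M rho t) (eval M rho u)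
  end.

Fixpoint sat (M : SeqStr) (rho : nat -> M) (phi : form) : Prop :=
  match phi with
  | fbot => False
  | feq t u => eval M rho t = eval M rho u
  | fnot p => ~ sat M rho p
  | fand p q => sat M rho p /\ sat M rho q
  | for_ p q => sat M rho p \/ sat M rho q
  | fimp p q => sat M rho p -> sat M rho q
  | fall p => forall a : M, sat M (scons a rho) p
  | fex p => exists a : M, sat M (scons a rho) p
  end.

(** Parameter-free environment: variables 0 and 1 are x and y; all other
    variables are (harmlessly) set to the constant e. *)
Definition env2 (M : SeqStr) (x y : M) : nat -> M :=
  fun n => match n with 0 => x | 1 => y | _ => se M end.

Definition Seq_model (M : SeqStr) : Prop :=
  (forall x y : M, sturn M x y <> se M) /\
  (forall x1 x2 y1 y2 : M, sturn M x1 x2 = sturn M y1 y2 -> x1 = y1 /\ x2 = y2) /\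
  (forall x : M, scirc M x (se M) = x) /\
  (forall x y z : M, scirc M x (sturn M y z) = sturn M (scirc M x y) z) /\
  (forall x : M, x = se M \/ exists y z : M, x = sturn M y z).

Definition SeqPlus_model (M : SeqStr) : Prop :=
  Seq_model M /\
  (forall x : M, scirc M x (se M) = x /\ scirc M (se M) x = x) /\
  (forall x y z w : M,
      scirc M x y = scirc M z w <->
      exists u : M, (z = scirc M x u /\ scirc M u w = y) \/
                    (x = scirc M z u /\ scirc M u y = w)) /\
  (forall x y z : M,
      (scirc M x y = scirc M x z \/ scirc M y x = scirc M z x) -> y = z).

(** The axioms of AST+EXT, together with the axioms of identity, hold in the
    structure (D, In) with identity interpreted by Eq, all quantifiers
    relativized to D. *)
Definition AST_EXT_holds {A : Type} (D : A -> Prop) (Eq In : A -> A -> Prop)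
  : Prop :=
  (exists x, D x) /\
  (forall x, D x -> Eq x x) /\
  (forall x y, D x -> D y -> Eq x y -> Eq y x) /\
  (forall x y z, D x -> D y -> D z -> Eq x y -> Eq y z -> Eq x z) /\
  (forall x x' y y', D x -> D x' -> D y -> D y' ->
      Eq x x' -> Eq y y' -> In x y -> In x' y') /\
  (exists y, D y /\ forall x, D x -> ~ In x y) /\
  (forall x y, D x -> D y ->
      exists z, D z /\ forall u, D u -> (In u z <-> (In u x \/ Eq u y))) /\
  (forall x y, D x -> D y ->
      (forall z, D z -> (In z x <-> In z y)) -> Eq x y).

(** AST+EXT is interpretable in the theory whose models are those satisfying
    [T]: there are a domain formula delta(x), and formulas eps_eq(x,y),
    eps_in(x,y) of the language {e, ⊢, ∘} (translating = and ∈) such that in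
    every model of T the translations of all axioms of AST+EXT (and of the
    identity axioms) hold, i.e. T proves them (semantic consequence). *)
Definition AST_EXT_interpretable_in (T : SeqStr -> Prop) : Prop :=
  exists delta eps_eq eps_in : form,
    forall M : SeqStr, T M ->
      AST_EXT_holds
        (fun x : M => sat M (env2 M x x) delta)
        (fun x y : M => sat M (env2 M x y) eps_eq)
        (fun x y : M => sat M (env2 M x y) eps_in).

(** Work in an arbitrary model of Seq.  A set is represented by a sequence, its elements by the entries of
    the sequence, and two sequences denote the same set when they are
    bisimilar.  As Seq has no induction, a bisimulation must be an object: a
    sequence [R] of pairs, read as a symmetric relation, where [v] and [w]
    count as [R]-similar when no sequence whose entries are closed under [R]
    separates them.  Bisimulations can be glued by concatenation provided
    they are tame (concatenating with them is associative and splits entries)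
    and admit comprehension over their field; both properties are preserved
    by the sequence operations, and comprehension is what makes bisimilarity
    transport entries.  Adjunction is appending an entry.  Extensionality
    needs a single bisimulation serving all entries at once, so the domain is
    cut down to sequences lying in a transitive tame sequence all of whose
    entries have this collection property, a property preserved by appending. *)

From Stdlib Require Import Classical Setoid.

Section SeqModel.

Variable M : SeqStr.
Hypothesis HM : Seq_model M.

Local Notation e := (se M).
Local Infix "⊢" := (sturn M) (at level 40, left associativity).
Local Infix "∘" := (scirc M) (at level 40, left associativity).

Lemma turn_neq_e x y : x ⊢ y <> e.
Proof. destruct HM as [H _]. exact (H x y). Qed.

Lemma turn_inj x1 x2 y1 y2 : x1 ⊢ x2 = y1 ⊢ y2 -> x1 = y1 /\ x2 = y2.
Proof. destruct HM as [_ [H _]]. exact (H x1 x2 y1 y2). Qed.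

Lemma circ_e x : x ∘ e = x.
Proof. destruct HM as [_ [_ [H _]]]. exact (H x). Qed.

Lemma circ_turn x y z : x ∘ (y ⊢ z) = (x ∘ y) ⊢ z.
Proof. destruct HM as [_ [_ [_ [H _]]]]. exact (H x y z). Qed.

Lemma seq_cases x : x = e \/ exists y z, x = y ⊢ z.
Proof. destruct HM as [_ [_ [_ [_ H]]]]. exact (H x). Qed.

Definition entry (u x : M) : Prop := exists a b, x = (a ⊢ u) ∘ b.

Lemma entry_e u : ~ entry u e.
Proof.
  intros [a [b Hb]]. destruct (seq_cases b) as [-> | [c [d ->]]].
  - rewrite circ_e in Hb. exact (turn_neq_e _ _ (eq_sym Hb)).
  - rewrite circ_turn in Hb. exact (turn_neq_e _ _ (eq_sym Hb)).
Qed.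

Lemma entry_turn u x y : entry u (x ⊢ y) <-> entry u x \/ u = y.
Proof.
  split.
  - intros [a [b Hb]]. destruct (seq_cases b) as [-> | [c [d ->]]].
    + rewrite circ_e in Hb. right. apply turn_inj in Hb. now destruct Hb.
    + rewrite circ_turn in Hb. apply turn_inj in Hb. destruct Hb as [-> _].
      left. now exists a, c.
  - intros [[a [b ->]] | ->].
    + exists a, (b ⊢ y). now rewrite circ_turn.
    + exists x, e. now rewrite circ_e.
Qed.

Definition opair (a b : M) : M := e ⊢ a ⊢ b.

Lemma opair_inj a b c d : opair a b = opair c d -> a = c /\ b = d.
Proof.
  intros H. apply turn_inj in H. destruct H as [H ->].
  apply turn_inj in H. now destruct H as [_ ->].
Qed.

Definition assoc_at (y : M) : Prop := forall w x, w ∘ x ∘ y = w ∘ (x ∘ y).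

Definition entries_split (y : M) : Prop :=
  forall x u, entry u (x ∘ y) <-> entry u x \/ entry u y.

Definition tame (y : M) : Prop := assoc_at y /\ entries_split y.

Lemma tame_e : tame e.
Proof.
  split.
  - intros w x. now rewrite !circ_e.
  - intros x u. rewrite circ_e. pose proof (entry_e u). tauto.
Qed.

Lemma tame_turn y z : tame y -> tame (y ⊢ z).
Proof.
  intros [HI HJ]. unfold assoc_at, entries_split in *. split.
  - intros w x. now rewrite !circ_turn, HI.
  - intros x u. rewrite circ_turn, !entry_turn, HJ. tauto.
Qed.

Lemma tame_circ y1 y2 : tame y1 -> tame y2 -> tame (y1 ∘ y2).
Proof.
  intros [I1 J1] [I2 J2]. unfold assoc_at, entries_split in *. split.
  - intros w x. now rewrite <- (I2 (w ∘ x) y1), I1, I2, I2.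
  - intros x u. rewrite <- I2, J2, J1, J2. tauto.
Qed.

Lemma tame_add_if S a (Q : Prop) :
  tame S -> exists S', tame S' /\ forall x, entry x S' <-> entry x S \/ (x = a /\ Q).
Proof.
  intros HS. destruct (classic Q) as [HQ | HQ].
  - exists (S ⊢ a). split; [now apply tame_turn |].
    intros x. rewrite entry_turn. tauto.
  - exists S. split; [exact HS | tauto].
Qed.

Definition related (p q R : M) : Prop := entry (opair p q) R \/ entry (opair q p) R.

Lemma related_sym p q R : related p q R -> related q p R.
Proof. unfold related. tauto. Qed.

Lemma related_e p q : ~ related p q e.
Proof.
  unfold related. pose proof (entry_e (opair p q)). pose proof (entry_e (opair q p)). tauto.
Qed.

Lemma related_turn p q R c :
  related p q (R ⊢ c) <-> related p q R \/ c = opair p q \/ c = opair q p.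
Proof. unfold related. rewrite !entry_turn. intuition congruence. Qed.

Lemma related_circ p q R1 R2 :
  entries_split R2 -> (related p q (R1 ∘ R2) <-> related p q R1 \/ related p q R2).
Proof. intros J. unfold related. rewrite !(J R1). tauto. Qed.

Definition subrel (R1 R2 : M) : Prop := forall p q, related p q R1 -> related p q R2.

Lemma subrel_turn R c : subrel R (R ⊢ c).
Proof. intros p q H. apply related_turn. now left. Qed.

Lemma subrel_circ_l R1 R2 : entries_split R2 -> subrel R1 (R1 ∘ R2).
Proof. intros J p q H. apply related_circ; auto. Qed.

Lemma subrel_circ_r R1 R2 : entries_split R2 -> subrel R2 (R1 ∘ R2).
Proof. intros J p q H. apply related_circ; auto. Qed.

Definition in_field (a R : M) : Prop := exists b, related a b R.

Lemma in_field_turn_opair a R p q :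
  in_field a (R ⊢ opair p q) <-> in_field a R \/ a = p \/ a = q.
Proof.
  unfold in_field. split.
  - intros [b Hb]. apply related_turn in Hb.
    destruct Hb as [Hb | [Hb | Hb]].
    + left. now exists b.
    + apply opair_inj in Hb. destruct Hb as [<- _]. auto.
    + apply opair_inj in Hb. destruct Hb as [_ <-]. auto.
  - intros [[b Hb] | [-> | ->]].
    + exists b. now apply subrel_turn.
    + exists q. apply related_turn. auto.
    + exists p. apply related_turn. auto.
Qed.

Lemma in_field_turn_other a R c :
  (forall p q, c <> opair p q) -> (in_field a (R ⊢ c) <-> in_field a R).
Proof.
  intros Hc. unfold in_field. split.
  - intros [b Hb]. apply related_turn in Hb.
    destruct Hb as [Hb | [Hb | Hb]]; [now exists b | now destruct (Hc _ _ Hb) ..].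
  - intros [b Hb]. exists b. now apply subrel_turn.
Qed.

Lemma in_field_circ a R1 R2 :
  entries_split R2 -> (in_field a (R1 ∘ R2) <-> in_field a R1 \/ in_field a R2).
Proof.
  intros J. unfold in_field. setoid_rewrite related_circ; [| exact J ..].
  split; [intros [b [Hb | Hb]] | intros [[b Hb] | [b Hb]]]; eauto.
Qed.

Definition filterable (P : M -> Prop) (R : M) : Prop :=
  exists S, tame S /\ forall a, entry a S <-> in_field a R /\ P a.

Lemma filterable_e P : filterable P e.
Proof.
  exists e. split; [exact tame_e |]. intros a. split.
  - intros Ha. destruct (entry_e a Ha).
  - intros [[b Hb] _]. destruct (related_e a b Hb).
Qed.

Lemma filterable_turn P R c : filterable P R -> filterable P (R ⊢ c).
Proof.
  intros [S [HS HSR]].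
  destruct (classic (exists p q, c = opair p q)) as [[p [q ->]] | Hc].
  - destruct (tame_add_if S p (P p) HS) as [S1 [HS1 E1]].
    destruct (tame_add_if S1 q (P q) HS1) as [S2 [HS2 E2]].
    exists S2. split; [exact HS2 |]. intros a.
    rewrite E2, E1, HSR, in_field_turn_opair.
    split; intuition (subst; auto).
  - exists S. split; [exact HS |]. intros a.
    rewrite in_field_turn_other; [exact (HSR a) |].
    intros p q Hpq. apply Hc. eauto.
Qed.

Lemma filterable_circ P R1 R2 :
  entries_split R2 -> filterable P R1 -> filterable P R2 -> filterable P (R1 ∘ R2).
Proof.
  intros J [S1 [HS1 E1]] [S2 [HS2 E2]].
  exists (S1 ∘ S2). split; [now apply tame_circ |]. intros a.
  destruct HS2 as [_ J2]. rewrite (J2 S1), E1, E2, in_field_circ by exact J. tauto.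
Qed.

(** * Bisimulations *)

Definition saturated (R S : M) : Prop :=
  forall p q, related p q R -> (entry p S <-> entry q S).

Definition similar (R a b : M) : Prop :=
  forall S, saturated R S -> (entry a S <-> entry b S).

Lemma similar_refl R a : similar R a a.
Proof. intros S _. reflexivity. Qed.

Lemma similar_sym R a b : similar R a b -> similar R b a.
Proof. intros H S HS. symmetry. exact (H S HS). Qed.

Lemma similar_trans R a b c : similar R a b -> similar R b c -> similar R a c.
Proof. intros H1 H2 S HS. rewrite (H1 S HS). exact (H2 S HS). Qed.

Lemma similar_mono R1 R2 a b : subrel R1 R2 -> similar R1 a b -> similar R2 a b.
Proof. intros Hsub H S HS. apply H. intros p q Hpq. exact (HS p q (Hsub p q Hpq)). Qed.

Lemma similar_of_related R a b : related a b R -> similar R a b.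
Proof. intros H S HS. exact (HS a b H). Qed.

Definition has_similar_entry (R v a : M) : Prop := exists w, entry w a /\ similar R v w.

Definition field_comprehension (R : M) : Prop :=
  forall v R0, filterable (has_similar_entry R0 v) R.

Definition admissible (R : M) : Prop := tame R /\ field_comprehension R.

Lemma admissible_e : admissible e.
Proof. split; [exact tame_e | intros v R0; apply filterable_e]. Qed.

Lemma admissible_turn R c : admissible R -> admissible (R ⊢ c).
Proof.
  intros [HK HF]. split; [now apply tame_turn |].
  intros v R0. apply filterable_turn, HF.
Qed.

Lemma admissible_circ R1 R2 : admissible R1 -> admissible R2 -> admissible (R1 ∘ R2).
Proof.
  intros [K1 F1] [K2 F2]. split; [now apply tame_circ |].
  intros v R0. apply filterable_circ; [apply K2 | apply F1 | apply F2].
Qed.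

Definition simulates (R x y : M) : Prop :=
  forall v, entry v x -> has_similar_entry R v y.

Definition bisimulation (R : M) : Prop :=
  forall p q, related p q R -> simulates R p q.

Lemma simulates_mono R1 R2 x y : subrel R1 R2 -> simulates R1 x y -> simulates R2 x y.
Proof.
  intros Hsub H v Hv. destruct (H v Hv) as [w [Hw Hvw]].
  exists w. split; [exact Hw |]. exact (similar_mono _ _ _ _ Hsub Hvw).
Qed.

Lemma bisimulation_e : bisimulation e.
Proof. intros p q H. destruct (related_e p q H). Qed.

Lemma bisimulation_circ R1 R2 :
  entries_split R2 -> bisimulation R1 -> bisimulation R2 -> bisimulation (R1 ∘ R2).
Proof.
  intros J B1 B2 p q H. apply related_circ in H; [| exact J]. destruct H as [H | H].
  - apply (simulates_mono R1); [now apply subrel_circ_l | exact (B1 p q H)].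
  - apply (simulates_mono R2); [now apply subrel_circ_r | exact (B2 p q H)].
Qed.

Lemma bisimulation_turn_opair R p q :
  bisimulation R -> simulates R p q -> simulates R q p -> bisimulation (R ⊢ opair p q).
Proof.
  intros HB Hpq Hqp a b Hab. apply (simulates_mono R); [apply subrel_turn |].
  apply related_turn in Hab. destruct Hab as [Hab | [Hab | Hab]].
  - exact (HB a b Hab).
  - apply opair_inj in Hab. destruct Hab as [<- <-]. exact Hpq.
  - apply opair_inj in Hab. destruct Hab as [<- <-]. exact Hqp.
Qed.

Lemma has_similar_entry_transfer R v p q :
  bisimulation R -> related p q R -> has_similar_entry R v p -> has_similar_entry R v q.
Proof.
  intros HB Hpq [w [Hw Hvw]]. destruct (HB p q Hpq w Hw) as [w' [Hw' Hww']].
  exists w'. split; [exact Hw' | exact (similar_trans _ _ _ _ Hvw Hww')].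
Qed.

Definition bisimilar (x y : M) : Prop :=
  exists R, admissible R /\ bisimulation R /\ similar R x y.

Lemma bisimilar_refl x : bisimilar x x.
Proof.
  exists e. split; [exact admissible_e | split; [exact bisimulation_e | apply similar_refl]].
Qed.

Lemma bisimilar_sym x y : bisimilar x y -> bisimilar y x.
Proof.
  intros [R [W [B S]]]. exists R. split; [exact W | split; [exact B | now apply similar_sym]].
Qed.

Lemma bisimilar_trans x y z : bisimilar x y -> bisimilar y z -> bisimilar x z.
Proof.
  intros [R1 [W1 [B1 S1]]] [R2 [W2 [B2 S2]]].
  assert (J2 : entries_split R2) by apply W2.
  exists (R1 ∘ R2). split; [now apply admissible_circ |].
  split; [now apply bisimulation_circ |].
  apply similar_trans with y.
  - exact (similar_mono _ _ _ _ (subrel_circ_l R1 R2 J2) S1).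
  - exact (similar_mono _ _ _ _ (subrel_circ_r R1 R2 J2) S2).
Qed.

(** Field comprehension provides a sequence whose entries are the members of
    the field of [R] with an entry [R]-similar to [v]; adding [x] makes it
    [R]-saturated, so it also contains [x']. *)
Lemma bisimilar_entry x x' v :
  bisimilar x x' -> entry v x -> exists w, entry w x' /\ bisimilar v w.
Proof.
  intros [R [[HK HF] [HB Hxx']]] Hv.
  destruct (HF v R) as [S [_ HS]].
  assert (Hx : has_similar_entry R v x) by (exists v; split; [exact Hv | apply similar_refl]).
  assert (Hmem : forall a, in_field a R -> (entry a (S ⊢ x) <-> has_similar_entry R v a)).
  { intros a Ha. rewrite entry_turn, HS. split.
    - intros [[_ H] | ->]; [exact H | exact Hx].
    - intros H. now left. }
  assert (Hsat : saturated R (S ⊢ x)).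
  { intros p q Hpq.
    rewrite (Hmem p) by (now exists q).
    rewrite (Hmem q) by (exists p; now apply related_sym).
    split; apply has_similar_entry_transfer; auto using related_sym. }
  assert (Hx' : has_similar_entry R v x').
  { assert (H : entry x' (S ⊢ x)) by (apply (Hxx' _ Hsat), entry_turn; now right).
    rewrite entry_turn, HS in H. destruct H as [[_ H] | ->]; [exact H | exact Hx]. }
  destruct Hx' as [w [Hw Hvw]].
  exists w. split; [exact Hw |]. exists R. exact (conj (conj HK HF) (conj HB Hvw)).
Qed.

(** * The interpretation *)

Definition mem (u x : M) : Prop := exists v, entry v x /\ bisimilar u v.

Lemma mem_congr x x' y y' : bisimilar x x' -> bisimilar y y' -> mem x y -> mem x' y'.
Proof.
  intros Hx Hy [v [Hv Hxv]]. destruct (bisimilar_entry y y' v Hy Hv) as [w [Hw Hvw]].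
  exists w. split; [exact Hw |].
  apply bisimilar_trans with x; [now apply bisimilar_sym |].
  now apply bisimilar_trans with v.
Qed.

Definition collecting (x : M) : Prop :=
  forall y, (forall v, entry v x -> mem v y) ->
  exists R, admissible R /\ bisimulation R /\ simulates R x y.

Lemma collecting_e : collecting e.
Proof.
  intros y _. exists e. split; [exact admissible_e | split; [exact bisimulation_e |]].
  intros v Hv. destruct (entry_e v Hv).
Qed.

Lemma collecting_turn x b : collecting x -> collecting (x ⊢ b).
Proof.
  intros Hx y Hxy.
  destruct (Hx y) as [R1 [W1 [B1 S1]]].
  { intros v Hv. apply Hxy, entry_turn. now left. }
  destruct (Hxy b) as [w [Hw [R2 [W2 [B2 S2]]]]].
  { apply entry_turn. now right. }
  assert (J2 : entries_split R2) by apply W2.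
  exists (R1 ∘ R2). split; [now apply admissible_circ |].
  split; [now apply bisimulation_circ |].
  intros v Hv. apply entry_turn in Hv. destruct Hv as [Hv | ->].
  - exact (simulates_mono _ _ _ _ (subrel_circ_l R1 R2 J2) S1 v Hv).
  - exists w. split; [exact Hw |]. exact (similar_mono _ _ _ _ (subrel_circ_r R1 R2 J2) S2).
Qed.

Definition is_set (x : M) : Prop :=
  exists T, tame T /\ entry x T /\
  forall a, entry a T -> collecting a /\ forall u, entry u a -> entry u T.

Lemma is_set_e : is_set e.
Proof.
  exists (e ⊢ e). split; [apply tame_turn, tame_e |].
  split; [apply entry_turn; now right |].
  intros a Ha. apply entry_turn in Ha. destruct Ha as [Ha | ->]; [destruct (entry_e a Ha) |].
  split; [exact collecting_e |]. intros u Hu. destruct (entry_e u Hu).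
Qed.

Lemma is_set_turn x y : is_set x -> is_set y -> is_set (x ⊢ y).
Proof.
  intros [T1 [K1 [E1 H1]]] [T2 [K2 [E2 H2]]].
  assert (J2 : entries_split T2) by apply K2.
  set (T := T1 ∘ T2 ⊢ (x ⊢ y)).
  assert (HT : forall u, entry u T <-> entry u T1 \/ entry u T2 \/ u = x ⊢ y).
  { intros u. unfold T. rewrite entry_turn, (J2 T1). tauto. }
  exists T. split; [now apply tame_turn, tame_circ |].
  split; [apply HT; auto |].
  intros a Ha. apply HT in Ha. destruct Ha as [Ha | [Ha | ->]].
  - destruct (H1 a Ha) as [Ca Sa]. split; [exact Ca |]. intros u Hu. apply HT. auto.
  - destruct (H2 a Ha) as [Ca Sa]. split; [exact Ca |]. intros u Hu. apply HT. auto.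
  - destruct (H1 x E1) as [Cx Sx]. split; [now apply collecting_turn |].
    intros u Hu. apply HT. apply entry_turn in Hu. destruct Hu as [Hu | ->]; auto.
Qed.

Lemma is_set_entry x v : is_set x -> entry v x -> is_set v.
Proof.
  intros [T [K [E H]]] Hv. exists T. split; [exact K |].
  split; [exact (proj2 (H x E) v Hv) | exact H].
Qed.

Lemma is_set_collecting x : is_set x -> collecting x.
Proof. intros [T [_ [E H]]]. exact (proj1 (H x E)). Qed.

Lemma simulates_of_mem_incl x y :
  is_set x -> (forall z, is_set z -> mem z x -> mem z y) ->
  exists R, admissible R /\ bisimulation R /\ simulates R x y.
Proof.
  intros Dx Hxy. apply (is_set_collecting x Dx). intros v Hv.
  apply Hxy; [exact (is_set_entry x v Dx Hv) |].
  exists v. split; [exact Hv | apply bisimilar_refl].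
Qed.

Lemma extensionality x y :
  is_set x -> is_set y -> (forall z, is_set z -> (mem z x <-> mem z y)) -> bisimilar x y.
Proof.
  intros Dx Dy Hxy.
  destruct (simulates_of_mem_incl x y Dx) as [R1 [W1 [B1 S1]]]; [apply Hxy |].
  destruct (simulates_of_mem_incl y x Dy) as [R2 [W2 [B2 S2]]]; [apply Hxy |].
  assert (J2 : entries_split R2) by apply W2.
  exists (R1 ∘ R2 ⊢ opair x y). split; [now apply admissible_turn, admissible_circ |]. split.
  - apply bisimulation_turn_opair; [now apply bisimulation_circ | ..].
    + exact (simulates_mono _ _ _ _ (subrel_circ_l R1 R2 J2) S1).
    + exact (simulates_mono _ _ _ _ (subrel_circ_r R1 R2 J2) S2).
  - apply similar_of_related, related_turn. now right; left.
Qed.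

Lemma ast_ext_holds : AST_EXT_holds is_set bisimilar mem.
Proof.
  split; [exists e; exact is_set_e |].
  split; [intros x _; apply bisimilar_refl |].
  split; [intros x y _ _; apply bisimilar_sym |].
  split; [intros x y z _ _ _; apply bisimilar_trans |].
  split; [intros x x' y y' _ _ _ _; apply mem_congr |].
  split.
  { exists e. split; [exact is_set_e |]. intros x _ [v [Hv _]]. exact (entry_e v Hv). }
  split.
  { intros x y Dx Dy. exists (x ⊢ y). split; [now apply is_set_turn |].
    intros u _. unfold mem. setoid_rewrite entry_turn. split.
    - intros [v [[Hv | ->] Huv]]; [left; now exists v | now right].
    - intros [[v [Hv Huv]] | Huy]; [exists v; auto | exists y; auto]. }
  intros x y Dx Dy. now apply extensionality.
Qed.

End SeqModel.

(** * Definability in the language {e, ⊢, ∘} *)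

Fixpoint shift (t : term) : term :=
  match t with
  | tvar n => tvar (S n)
  | te => te
  | tturn a b => tturn (shift a) (shift b)
  | tcirc a b => tcirc (shift a) (shift b)
  end.

Definition shiftn (n : nat) (t : term) : term := Nat.iter n shift t.

Lemma eval_shift M rho a t : eval M (scons a rho) (shift t) = eval M rho t.
Proof. induction t; simpl; congruence. Qed.

Definition fiff (p q : form) : form := fand (fimp p q) (fimp q p).

Local Notation "# n" := (tvar n) (at level 0, format "# n").

Definition f_entry (u x : term) : form :=
  fex (fex (feq (shiftn 2 x) (tcirc (tturn #1 (shiftn 2 u)) #0))).

Definition t_opair (a b : term) : term := tturn (tturn te a) b.

Definition f_related (p q R : term) : form :=
  for_ (f_entry (t_opair p q) R) (f_entry (t_opair q p) R).

Definition f_in_field (a R : term) : form := fex (f_related (shift a) #0 (shift R)).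

Definition f_tame (y : term) : form :=
  fand (fall (fall (feq (tcirc (tcirc #1 #0) (shiftn 2 y)) (tcirc #1 (tcirc #0 (shiftn 2 y))))))
       (fall (fall (fiff (f_entry #0 (tcirc #1 (shiftn 2 y)))
                         (for_ (f_entry #0 #1) (f_entry #0 (shiftn 2 y)))))).

Definition f_saturated (R S : term) : form :=
  fall (fall (fimp (f_related #1 #0 (shiftn 2 R))
                   (fiff (f_entry #1 (shiftn 2 S)) (f_entry #0 (shiftn 2 S))))).

Definition f_similar (R a b : term) : form :=
  fall (fimp (f_saturated (shift R) #0) (fiff (f_entry (shift a) #0) (f_entry (shift b) #0))).

Definition f_has_similar_entry (R v a : term) : form :=
  fex (fand (f_entry #0 (shift a)) (f_similar (shift R) (shift v) #0)).

Definition f_field_comprehension (R : term) : form :=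
  fall (fall (fex (fand (f_tame #0)
    (fall (fiff (f_entry #0 #1)
                (fand (f_in_field #0 (shiftn 4 R)) (f_has_similar_entry #2 #3 #0))))))).

Definition f_admissible (R : term) : form := fand (f_tame R) (f_field_comprehension R).

Definition f_simulates (R x y : term) : form :=
  fall (fimp (f_entry #0 (shift x)) (f_has_similar_entry (shift R) #0 (shift y))).

Definition f_bisimulation (R : term) : form :=
  fall (fall (fimp (f_related #1 #0 (shiftn 2 R)) (f_simulates (shiftn 2 R) #1 #0))).

Definition f_bisimilar (x y : term) : form :=
  fex (fand (f_admissible #0) (fand (f_bisimulation #0) (f_similar #0 (shift x) (shift y)))).

Definition f_mem (u x : term) : form :=
  fex (fand (f_entry #0 (shift x)) (f_bisimilar (shift u) #0)).

Definition f_collecting (x : term) : form :=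
  fall (fimp (fall (fimp (f_entry #0 (shiftn 2 x)) (f_mem #0 #1)))
             (fex (fand (f_admissible #0)
                        (fand (f_bisimulation #0) (f_simulates #0 (shiftn 2 x) #1))))).

Definition f_is_set (x : term) : form :=
  fex (fand (f_tame #0) (fand (f_entry (shift x) #0)
    (fall (fimp (f_entry #0 #1)
                (fand (f_collecting #0) (fall (fimp (f_entry #0 #1) (f_entry #0 #2)))))))).

(** Keeps [cbn] from unfolding subformulas, so that the [sat_f_*] lemmas below
    can be applied compositionally. *)
Arguments f_entry : simpl never.
Arguments f_related : simpl never.
Arguments f_in_field : simpl never.
Arguments f_tame : simpl never.
Arguments f_saturated : simpl never.
Arguments f_similar : simpl never.
Arguments f_has_similar_entry : simpl never.
Arguments f_field_comprehension : simpl never.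
Arguments f_admissible : simpl never.
Arguments f_simulates : simpl never.
Arguments f_bisimulation : simpl never.
Arguments f_bisimilar : simpl never.
Arguments f_mem : simpl never.
Arguments f_collecting : simpl never.

Section Definability.

Variable M : SeqStr.

Ltac unfold_sat := cbn; repeat setoid_rewrite eval_shift.

Lemma sat_f_entry rho u x : sat M rho (f_entry u x) <-> entry M (eval M rho u) (eval M rho x).
Proof. unfold f_entry. unfold_sat. reflexivity. Qed.

Lemma sat_f_related rho p q R :
  sat M rho (f_related p q R) <-> related M (eval M rho p) (eval M rho q) (eval M rho R).
Proof. unfold f_related. unfold_sat. rewrite !sat_f_entry. reflexivity. Qed.

Lemma sat_f_in_field rho a R :
  sat M rho (f_in_field a R) <-> in_field M (eval M rho a) (eval M rho R).
Proof. unfold f_in_field. unfold_sat. setoid_rewrite sat_f_related. unfold_sat. reflexivity. Qed.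

Lemma sat_f_tame rho y : sat M rho (f_tame y) <-> tame M (eval M rho y).
Proof. unfold f_tame. unfold_sat. setoid_rewrite sat_f_entry. unfold_sat. reflexivity. Qed.

Lemma sat_f_saturated rho R S :
  sat M rho (f_saturated R S) <-> saturated M (eval M rho R) (eval M rho S).
Proof.
  unfold f_saturated. unfold_sat. setoid_rewrite sat_f_related. setoid_rewrite sat_f_entry.
  unfold_sat. reflexivity.
Qed.

Lemma sat_f_similar rho R a b :
  sat M rho (f_similar R a b) <-> similar M (eval M rho R) (eval M rho a) (eval M rho b).
Proof.
  unfold f_similar. unfold_sat. setoid_rewrite sat_f_saturated. setoid_rewrite sat_f_entry.
  unfold_sat. reflexivity.
Qed.

Lemma sat_f_has_similar_entry rho R v a :
  sat M rho (f_has_similar_entry R v a)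
  <-> has_similar_entry M (eval M rho R) (eval M rho v) (eval M rho a).
Proof.
  unfold f_has_similar_entry. unfold_sat. setoid_rewrite sat_f_entry.
  setoid_rewrite sat_f_similar. unfold_sat. reflexivity.
Qed.

Lemma sat_f_field_comprehension rho R :
  sat M rho (f_field_comprehension R) <-> field_comprehension M (eval M rho R).
Proof.
  unfold f_field_comprehension. unfold_sat. setoid_rewrite sat_f_tame.
  setoid_rewrite sat_f_entry. setoid_rewrite sat_f_in_field.
  setoid_rewrite sat_f_has_similar_entry. unfold_sat. reflexivity.
Qed.

Lemma sat_f_admissible rho R : sat M rho (f_admissible R) <-> admissible M (eval M rho R).
Proof.
  unfold f_admissible. unfold_sat. rewrite sat_f_tame, sat_f_field_comprehension. reflexivity.
Qed.

Lemma sat_f_simulates rho R x y :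
  sat M rho (f_simulates R x y) <-> simulates M (eval M rho R) (eval M rho x) (eval M rho y).
Proof.
  unfold f_simulates. unfold_sat. setoid_rewrite sat_f_entry.
  setoid_rewrite sat_f_has_similar_entry. unfold_sat. reflexivity.
Qed.

Lemma sat_f_bisimulation rho R : sat M rho (f_bisimulation R) <-> bisimulation M (eval M rho R).
Proof.
  unfold f_bisimulation. unfold_sat. setoid_rewrite sat_f_related.
  setoid_rewrite sat_f_simulates. unfold_sat. reflexivity.
Qed.

Lemma sat_f_bisimilar rho x y :
  sat M rho (f_bisimilar x y) <-> bisimilar M (eval M rho x) (eval M rho y).
Proof.
  unfold f_bisimilar. unfold_sat. setoid_rewrite sat_f_admissible.
  setoid_rewrite sat_f_bisimulation. setoid_rewrite sat_f_similar. unfold_sat. reflexivity.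
Qed.

Lemma sat_f_mem rho u x : sat M rho (f_mem u x) <-> mem M (eval M rho u) (eval M rho x).
Proof.
  unfold f_mem. unfold_sat. setoid_rewrite sat_f_entry. setoid_rewrite sat_f_bisimilar.
  unfold_sat. reflexivity.
Qed.

Lemma sat_f_collecting rho x : sat M rho (f_collecting x) <-> collecting M (eval M rho x).
Proof.
  unfold f_collecting. unfold_sat. setoid_rewrite sat_f_entry. setoid_rewrite sat_f_mem.
  setoid_rewrite sat_f_admissible. setoid_rewrite sat_f_bisimulation.
  setoid_rewrite sat_f_simulates. unfold_sat. reflexivity.
Qed.

Lemma sat_f_is_set rho x : sat M rho (f_is_set x) <-> is_set M (eval M rho x).
Proof.
  unfold f_is_set. unfold_sat. setoid_rewrite sat_f_tame. setoid_rewrite sat_f_entry.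
  setoid_rewrite sat_f_collecting. unfold_sat. reflexivity.
Qed.

End Definability.

Lemma AST_EXT_holds_iff {A : Type} (D D' : A -> Prop) (Eq Eq' In In' : A -> A -> Prop) :
  (forall x, D x <-> D' x) -> (forall x y, Eq x y <-> Eq' x y) ->
  (forall x y, In x y <-> In' x y) ->
  AST_EXT_holds D Eq In -> AST_EXT_holds D' Eq' In'.
Proof.
  intros HD HEq HIn. unfold AST_EXT_holds.
  setoid_rewrite HD. setoid_rewrite HEq. setoid_rewrite HIn. intros H. exact H.
Qed.

Lemma AST_EXT_interpretable_in_Seq : AST_EXT_interpretable_in Seq_model.
Proof.
  exists (f_is_set #0), (f_bisimilar #0 #1), (f_mem #0 #1).
  intros M HM. apply (AST_EXT_holds_iff (is_set M) _ (bisimilar M) _ (mem M)).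
  - intros x. now rewrite sat_f_is_set.
  - intros x y. now rewrite sat_f_bisimilar.
  - intros x y. now rewrite sat_f_mem.
  - exact (ast_ext_holds M HM).
Qed.

Lemma AST_EXT_interpretable_in_strengthen (T T' : SeqStr -> Prop) :
  (forall M, T' M -> T M) -> AST_EXT_interpretable_in T -> AST_EXT_interpretable_in T'.
Proof.
  intros HT [delta [eps_eq [eps_in H]]].
  exists delta, eps_eq, eps_in. intros M HM. exact (H M (HT M HM)).
Qed.

Theorem theorem8 :
  AST_EXT_interpretable_in SeqPlus_model /\ AST_EXT_interpretable_in Seq_model.
Proof.
  split; [| exact AST_EXT_interpretable_in_Seq].
  apply (AST_EXT_interpretable_in_strengthen Seq_model); [| exact AST_EXT_interpretable_in_Seq].
  intros M [HM _]. exact HM.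
Qed.
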